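(* For every positive integer $m$ there is no homomorphism $\mathrm{KG}(6,2)\to S_m$.
   Context: $\mathrm{KG}(6,2)$ is the Kneser graph whose vertices are the $2$-element subsets of $\{1,\dots,6\}$, two being adjacent iff disjoint. The symmetric shift graph $S_m$ has vertex set $\{(i,j):1\le i,j\le m,\ i\ne j\}$, and $(i,j)$ is adjacent to $(k,\ell)$ iff $j=k$ or $i=\ell$. A homomorphism is an edge-preserving map between vertex sets. *)

From mathcomp Require Import all_boot.
Set Implicit Arguments. Unset Strict Implicit. Unset Printing Implicit Defensive.

(* Kneser graph KG(n,k): vertices are k-subsets of {1..n} (here 'I_n),
   adjacent iff disjoint. *)
Definition KG_vertex (n k : nat) := {A : {set 'I_n} | #|A| == k}.
Definition KG_adj (n k : nat) (A B : KG_vertex n k) : bool :=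
  [disjoint (val A) & (val B)].

(* Symmetric shift graph S_m: vertices are ordered pairs (i,j) of distinct
   elements of {1..m} (here 'I_m); (i,j) ~ (k,l) iff j = k or i = l. *)
Definition shift_vertex (m : nat) := {p : 'I_m * 'I_m | p.1 != p.2}.
Definition shift_adj (m : nat) (u v : shift_vertex m) : bool :=
  ((val u).2 == (val v).1) || ((val u).1 == (val v).2).

Definition is_hom (V W : Type) (adjV : V -> V -> bool) (adjW : W -> W -> bool)
  (f : V -> W) : Prop :=
  forall x y, adjV x y -> adjW (f x) (f y).

From mathcomp Require Import all_boot.

Set Implicit Arguments.
Unset Strict Implicit.
Unset Printing Implicit Defensive.

(* Three pairwise adjacent vertices of S_m form a directed triangle
   (i,j), (j,k), (k,i) read in one direction or the other.  The triangles of
   KG(6,2) are the 15 perfect matchings of K_6 and every edge lies in one of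
   them, so a homomorphism KG(6,2) -> S_m orients every matching so that the
   head of each vertex is the tail of the next one.  Already for ten of the
   matchings, every choice of orientations chains these identifications into
   a vertex whose tail equals its head, which is impossible in S_m. *)

Definition directed (V T : Type) (t h : V -> T) (x y z : V) : Prop :=
  [/\ h x = t y, h y = t z & h z = t x].

Section ShiftGraph.

Context {m : nat}.
Implicit Types u v w : shift_vertex m.

Definition tail u := (val u).1.
Definition head u := (val u).2.

Lemma tail_neq_head u : tail u <> head u.
Proof. by move=> tu_hu; case/negP: (valP u); rewrite -/(tail u) tu_hu. Qed.

Lemma shift_triangle u v w :
  shift_adj u v -> shift_adj v w -> shift_adj u w ->
  directed tail head u v w \/ directed tail head w v u.
Proof.
case: u v w => [[a b] ab] [[c e] ce] [[g k] gk].
rewrite /shift_adj /directed /tail /head /=; move: ab ce gk => /= /eqP ab /eqP ce /eqP gk.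
move=> /orP[]/eqP uv /orP[]/eqP vw /orP[]/eqP uw; try by [left | right].
all: by exfalso; congruence.
Qed.

End ShiftGraph.

Lemma duad_card (i j : nat) :
  i < j < 6 -> #|[set inord i; inord j] : {set 'I_6}| == 2.
Proof.
case/andP=> lt_ij j6; rewrite cards2.
case: (inord i =P inord j) => // /(congr1 (@nat_of_ord 6)).
by rewrite !inordK ?(ltn_trans lt_ij) // => eq_ij; rewrite eq_ij ltnn in lt_ij.
Qed.

Definition duad (i j : nat) (ij : i < j < 6) : KG_vertex 6 2 :=
  exist _ [set inord i; inord j] (duad_card ij).

Lemma duad_adj (i j k l : nat) {ij : i < j < 6} {kl : k < l < 6} :
  [&& i != k, i != l, j != k & j != l] -> KG_adj (duad ij) (duad kl).
Proof.
move=> /and4P[ik il jk jl]; have /andP[lt_ij j6] := ij; have /andP[lt_kl l6] := kl.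
have i6 := ltn_trans lt_ij j6; have k6 := ltn_trans lt_kl l6.
apply/pred0P=> x /=; rewrite !inE.
apply/negP=> /andP[/orP[]/eqP-> /orP[]/eqP/(congr1 (@nat_of_ord 6))].
all: by rewrite !inordK // => /eqP; apply/negP.
Qed.

Local Notation d i j := (@duad i j erefl).

Ltac orient triangle x y z :=
  case: (triangle x y z ltac:(by apply: duad_adj) ltac:(by apply: duad_adj)
                   ltac:(by apply: duad_adj)) => -[? ? ?]; try congruence.

Lemma KG62_no_directed_triangle_labelling (T : Type) (t h : KG_vertex 6 2 -> T) :
  (forall x, t x <> h x) ->
  ~ (forall x y z, KG_adj x y -> KG_adj y z -> KG_adj x z ->
       directed t h x y z \/ directed t h z y x).
Proof.
move=> t_neq_h triangle.
orient triangle (d 0 2) (d 1 3) (d 4 5).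
all: orient triangle (d 0 4) (d 1 3) (d 2 5).
all: orient triangle (d 0 3) (d 1 2) (d 4 5).
all: orient triangle (d 0 3) (d 1 4) (d 2 5).
all: orient triangle (d 0 4) (d 1 2) (d 3 5).
all: orient triangle (d 0 1) (d 2 5) (d 3 4).
all: orient triangle (d 0 1) (d 2 4) (d 3 5).
all: orient triangle (d 0 5) (d 1 3) (d 2 4).
all: orient triangle (d 0 1) (d 2 3) (d 4 5).
all: orient triangle (d 0 2) (d 1 5) (d 3 4).
Qed.

Theorem mainTheorem5 (m : nat) (hm : 0 < m) :
  ~ exists f : KG_vertex 6 2 -> shift_vertex m,
      is_hom (@KG_adj 6 2) (@shift_adj m) f.
Proof.
case=> f f_hom.
have [x|] := KG62_no_directed_triangle_labelling (t := tail \o f) (h := head \o f).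
  exact: tail_neq_head.
by move=> x y z xy yz xz; apply: shift_triangle; apply: f_hom.
Qed.
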